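(* For a right $R$-module $M$ the following are equivalent: (a) $M$ is endoregular; (b) $M$ satisfies the $D_2$ condition and every right $R$-module belongs to $\mathfrak{F}_M$.
   Context: Modules are unitary right $R$-modules. $M$ is endoregular if $\mathrm{End}_R(M)$ is a von Neumann regular ring. A module $N$ is finitely $M$-generated if there is an epimorphism $M^{(n)}\to N$ for some integer $n>0$. $\mathfrak{F}_M$ is the class of right $R$-modules $A$ such that for every monomorphism $\alpha:N\to M$ with $N$ finitely $M$-generated and every homomorphism $\beta:N\to A$ there is $\gamma:M\to A$ with $\beta=\gamma\alpha$. A module $X$ satisfies the $D_2$ condition if for every submodule $Y\le X$ such that $X/Y$ is isomorphic to a direct summand of $X$, $Y$ is a direct summand of $X$. *)

From HB Require Import structures.
From mathcomp Require Import all_boot all_algebra.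
Set Implicit Arguments. Unset Strict Implicit. Unset Printing Implicit Defensive.
Import GRing.Theory.
Local Open Scope ring_scope.

(* Right R-modules are modelled as (unitary) left modules over the converse
   ring R^c : for m : M and r : R, the right action m.r is  r *: m  with r : R^c. *)
Notation rmodType R := (lmodType (R^c)%type).

Definition is_hom (R : pzRingType) (M N : rmodType R) (f : M -> N) : Prop :=
  forall (a : R^c) (x y : M), f (a *: x + y) = a *: f x + f y.

(* M is endoregular: End_R(M) (multiplication = composition) is von Neumann
   regular, i.e. every f admits g with f g f = f. *)
Definition endoregular (R : pzRingType) (M : rmodType R) : Prop :=
  forall f : M -> M, is_hom f ->
    exists g : M -> M, is_hom g /\ (forall x, f (g (f x)) = f x).

Definition submod (R : pzRingType) (M : rmodType R) (Y : M -> Prop) : Prop :=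
  Y 0 /\ (forall (a : R^c) (x y : M), Y x -> Y y -> Y (a *: x + y)).

Definition summand (R : pzRingType) (M : rmodType R) (Y : M -> Prop) : Prop :=
  submod Y /\ exists Z : M -> Prop, submod Z /\
    (forall x, Y x -> Z x -> x = 0) /\
    (forall x, exists y z, Y y /\ Z z /\ x = y + z).

(* M/Y is isomorphic to a direct summand K of M: equivalently (first
   isomorphism theorem) there is an epimorphism from M onto a direct
   summand K of M whose kernel is Y. *)
Definition quot_iso_summand (R : pzRingType) (M : rmodType R) (Y : M -> Prop) : Prop :=
  exists p : M -> M, is_hom p /\
    summand (fun x => exists m, p m = x) /\
    (forall m, p m = 0 <-> Y m).

Definition D2 (R : pzRingType) (M : rmodType R) : Prop :=
  forall Y : M -> Prop, submod Y -> quot_iso_summand Y -> summand Y.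

Definition fin_gen_by (R : pzRingType) (M N : rmodType R) : Prop :=
  exists n : nat, (0 < n)%N /\
    exists f : {ffun 'I_n -> M} -> N, is_hom f /\ (forall y, exists x, f x = y).

Definition in_FM (R : pzRingType) (M A : rmodType R) : Prop :=
  forall (N : rmodType R) (alpha : N -> M) (beta : N -> A),
    fin_gen_by M N -> is_hom alpha -> injective alpha -> is_hom beta ->
    exists gamma : M -> A, is_hom gamma /\ (forall x, beta x = gamma (alpha x)).

From HB Require Import structures.
From mathcomp Require Import all_boot all_algebra.
From mathcomp Require Import boolp.
Set Implicit Arguments. Unset Strict Implicit. Unset Printing Implicit Defensive.
Import GRing.Theory.
Local Open Scope ring_scope.

(* If p g p = p, then Ker p is a direct summand with complement
   Im (g p); this gives D2 (Lemma regular_kernel_summand).  For F_M, let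
   alpha : N -> M be a monomorphism with N finitely M-generated; then Im alpha
   is the sum of the images of finitely many endomorphisms h_k of M.  By
   induction on the number of h_k, regularity yields an idempotent e of M
   fixing each Im h_k with Im e inside their sum (idempotent_onto_sum), i.e.
   a retraction of M onto Im alpha, and beta o alpha^-1 o e extends beta.

   Given f, the image Im f is finitely M-generated; applying
   F_M to its inclusion and the identity gives a retraction r of M onto Im f,
   so Im f = M / Ker f is a summand and D2 makes Ker f a summand.  A complement
   of Ker f maps isomorphically onto Im f, so r lifts to g with f g = r,
   whence f g f = f. *)

Section HomTheory.
Variables (R : pzRingType) (M N : rmodType R) (f : M -> N) (hf : is_hom f).

Lemma hom0 : f 0 = 0.
Proof.
by have := hf 1 0 0; rewrite !scale1r addr0 -{1}[f 0]addr0 => /addrI.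
Qed.

Lemma homD x y : f (x + y) = f x + f y.
Proof. by have := hf 1 x y; rewrite !scale1r. Qed.

Lemma homB x y : f (x - y) = f x - f y.
Proof. by rewrite -scaleN1r addrC hf scaleN1r addrC. Qed.

Lemma hom_sum n (F : 'I_n -> M) : f (\sum_(k < n) F k) = \sum_(k < n) f (F k).
Proof. exact: (big_morph f homD hom0). Qed.
End HomTheory.

Lemma hom_comp (R : pzRingType) (M N K : rmodType R) (f : N -> K) (g : M -> N) :
  is_hom f -> is_hom g -> is_hom (fun x => f (g x)).
Proof. by move=> hf hg a x y; rewrite hg hf. Qed.

Lemma hom_add (R : pzRingType) (M N : rmodType R) (f g : M -> N) :
  is_hom f -> is_hom g -> is_hom (fun x => f x + g x).
Proof. by move=> hf hg a x y; rewrite hf hg scalerDr addrACA. Qed.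

Lemma hom_sub (R : pzRingType) (M N : rmodType R) (f g : M -> N) :
  is_hom f -> is_hom g -> is_hom (fun x => f x - g x).
Proof. by move=> hf hg a x y; rewrite hf hg scalerBr opprD addrACA. Qed.

Lemma submod_kernel (R : pzRingType) (M N : rmodType R) (f : M -> N) :
  is_hom f -> submod (fun x => f x = 0).
Proof.
move=> hf; split; first exact: hom0.
by move=> a x y fx0 fy0; rewrite hf fx0 fy0 scaler0 addr0.
Qed.

Lemma submod_image (R : pzRingType) (M N : rmodType R) (f : M -> N) :
  is_hom f -> submod (fun y => exists x, f x = y).
Proof.
move=> hf; split; first by exists 0; rewrite hom0.
by move=> a _ _ [x <-] [y <-]; exists (a *: x + y); rewrite hf.
Qed.

Lemma submodB (R : pzRingType) (M : rmodType R) (P : M -> Prop) x y :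
  submod P -> P x -> P y -> P (x - y).
Proof.
by case=> P0 PS Px Py; have := PS (-1) y x Py Px; rewrite scaleN1r addrC.
Qed.

(* The (otherwise unused) proof of submod P is an
   argument of in_submod so that the module structure of submod_type can be
   found by canonical structure inference. *)
Definition in_submod (R : pzRingType) (M : rmodType R) (P : M -> Prop)
  of submod P : {pred M} := fun x => `[< P x >].

Section SubmoduleType.
Variables (R : pzRingType) (M : rmodType R) (P : M -> Prop) (hP : submod P).

Lemma in_submod_closed : submod_closed (in_submod hP).
Proof.
case: hP => P0 PS; split; first exact/asboolP.
by move=> a x y /asboolP Px /asboolP Py; apply/asboolP; exact: PS.
Qed.

HB.instance Definition _ := GRing.isSubmodClosed.Build (R^c) M (in_submod hP)
  (GRing.submod_closed_semi in_submod_closed).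

Definition submod_type : Type := {x : M | x \in in_submod hP}.
HB.instance Definition _ :=
  [isSub for (@proj1_sig M _ : submod_type -> M)].
HB.instance Definition _ := [Choice of submod_type by <:].
HB.instance Definition _ := [SubChoice_isSubLmodule of submod_type by <:].

Lemma val_is_hom : is_hom (fun x : submod_type => val x).
Proof. by []. Qed.
End SubmoduleType.

(* If f g f = f, then Ker f is a direct summand, complemented by Im (g f). *)
Lemma regular_kernel_summand (R : pzRingType) (M N : rmodType R)
    (f : M -> N) (g : N -> M) :
  is_hom f -> is_hom g -> (forall x, f (g (f x)) = f x) ->
  summand (fun x => f x = 0).
Proof.
move=> hf hg fgf; split; first exact: submod_kernel.
exists (fun x => exists m, g (f m) = x); split.
  exact/submod_image/hom_comp.
split.
  by move=> x + [m gfm]; rewrite -gfm fgf => ->; rewrite hom0.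
move=> x; exists (x - g (f x)), (g (f x)); split; last split.
- by rewrite homB // fgf subrr.
- by exists x.
- by rewrite subrK.
Qed.

(* A submodule onto which M retracts is a direct summand, complemented by
   the kernel of the retraction. *)
Lemma retract_summand (R : pzRingType) (M : rmodType R) (P : M -> Prop)
    (r : M -> M) :
  submod P -> is_hom r -> (forall x, P (r x)) -> (forall x, P x -> r x = x) ->
  summand P.
Proof.
move=> hP hr Pr rP; split => //; exists (fun x => r x = 0); split.
  exact: submod_kernel.
split; first by move=> x Px rx0; rewrite -(rP x Px).
move=> x; exists (r x), (x - r x); split; first exact: Pr.
by split; [rewrite homB // (rP _ (Pr x)) subrr | rewrite addrC subrK].
Qed.

(* If Ker f is a direct summand with complement C, then f maps C bijectively
   onto Im f; hence every homomorphism into Im f lifts through f. *)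
Lemma kernel_summand_lift (R : pzRingType) (M K N : rmodType R)
    (f : M -> K) (r : N -> K) :
  is_hom f -> summand (fun x => f x = 0) -> is_hom r ->
  (forall y, exists x, f x = r y) ->
  exists g : N -> M, is_hom g /\ forall y, f (g y) = r y.
Proof.
move=> hf [_ [C [hC [kerC decC]]]] hr rIm.
have C_inj c c' : C c -> C c' -> f c = f c' -> c = c'.
  move=> Cc Cc' fcc'; apply/eqP; rewrite -subr_eq0; apply/eqP.
  by apply: kerC; [rewrite homB // fcc' subrr | exact: submodB].
have lift y : exists c, C c /\ f c = r y.
  have [x fx] := rIm y; have [k [c [fk0 [Cc xkc]]]] := decC x.
  by exists c; rewrite -fx xkc homD // fk0 add0r.
pose g y := proj1_sig (cid (lift y)).
have [Cg fg] : (forall y, C (g y)) /\ (forall y, f (g y) = r y).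
  by split=> y; case: (proj2_sig (cid (lift y))).
exists g; split => // a y y'; apply: C_inj; first exact: Cg.
  by case: hC => _; apply; apply: Cg.
by rewrite hf !fg hr.
Qed.

Section EndoregularIdempotents.
Variables (R : pzRingType) (M : rmodType R) (reg : endoregular M).

Lemma idempotent_absorb (e h : M -> M) :
  is_hom e -> (forall m, e (e m) = e m) -> is_hom h ->
  exists e' : M -> M, [/\ is_hom e', (forall m, e' (e' m) = e' m),
    (forall m, e' (e m) = e m), (forall m, e' (h m) = h m) &
    (forall m, exists u w, e' m = e u + h w)].
Proof.
move=> he ee hh.
(* c is the part of h outside Im e; f1 is an idempotent onto Im c killing
   Im e, and e' = e + f1. *)
pose c m := h m - e (h m).
have hc : is_hom c by apply: hom_sub => //; apply: hom_comp.
have ec m : e (c m) = 0 by rewrite /c homB // ee subrr.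
have [y [hy cyc]] := reg hc.
pose f1 m := c (y (m - e m)).
have hf1 : is_hom f1 by do 2 apply: hom_comp => //; exact: hom_sub.
have f1e m : f1 (e m) = 0 by rewrite /f1 ee subrr !hom0.
have f1f1 m : f1 (f1 m) = f1 m by rewrite {1}/f1 ec subr0 cyc.
exists (fun m => e m + f1 m); split.
- exact: hom_add.
- by move=> m; rewrite homD // homD // ee ec f1e f1f1 addr0 add0r.
- by move=> m; rewrite ee f1e addr0.
- by move=> m; rewrite /f1 -/(c m) cyc /c addrC subrK.
- move=> m; exists (m - h (y (m - e m))), (y (m - e m)).
  by rewrite /f1 /c (homB he) addrA addrAC.
Qed.

Lemma idempotent_onto_sum (h : nat -> M -> M) (n : nat) :
  (forall k, is_hom (h k)) ->
  exists e : M -> M, [/\ is_hom e, (forall m, e (e m) = e m),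
    (forall k, (k < n)%N -> forall m, e (h k m) = h k m) &
    (forall m, exists x : nat -> M, e m = \sum_(k < n) h k (x k))].
Proof.
move=> hh; elim: n => [|n [e [he ee eh eIm]]].
  exists (fun _ => 0); split => //.
  - by move=> a x y; rewrite scaler0 addr0.
  - by exists (fun _ => 0); rewrite big_ord0.
have [e' [he' ee' e'e e'h e'Im]] := idempotent_absorb he ee (hh n).
exists e'; split => //.
  move=> k; rewrite ltnS leq_eqVlt => /orP[/eqP -> // | ltkn] m.
  by rewrite -eh // e'e.
move=> m; have [u [w ->]] := e'Im m; have [x ->] := eIm u.
exists (fun k => if k == n then w else x k).
rewrite big_ord_recr /= eqxx; congr (_ + _).
by apply: eq_bigr => k _; rewrite ltn_eqF.
Qed.
End EndoregularIdempotents.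

Section CoordinateInjections.
Variables (R : pzRingType) (M : rmodType R) (n : nat).

Definition inj_coord (k : nat) (m : M) : {ffun 'I_n -> M} :=
  [ffun j : 'I_n => if (j : nat) == k then m else 0].

Lemma inj_coord_hom k : is_hom (inj_coord k).
Proof.
move=> a x y; apply/ffunP => j; rewrite !ffunE.
by case: ifP => _ //; rewrite scaler0 addr0.
Qed.

Lemma sum_inj_coord (X : {ffun 'I_n -> M}) :
  X = \sum_(k < n) inj_coord k (X k).
Proof.
apply/ffunP => j; rewrite sum_ffunE (bigD1 j) //= ffunE eqxx big1 ?addr0 //.
by move=> k /negP jk; rewrite ffunE; case: eqP => // /val_inj jk'; case: jk; rewrite jk'.
Qed.
End CoordinateInjections.

Lemma endoregular_fin_gen_retract (R : pzRingType) (M N : rmodType R)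
    (alpha : N -> M) :
  endoregular M -> fin_gen_by M N -> is_hom alpha ->
  exists e : M -> M, [/\ is_hom e, (forall x, e (alpha x) = alpha x) &
    (forall m, exists x, alpha x = e m)].
Proof.
move=> reg [n [_ [f [hf f_onto]]]] halpha.
pose h k m := alpha (f (inj_coord n k m)).
have hh k : is_hom (h k) by do 2 apply: hom_comp => //; exact: inj_coord_hom.
have alpha_f X : alpha (f X) = \sum_(k < n) h k (X k).
  by rewrite {1}(sum_inj_coord X) !hom_sum.
have [e [he _ eh eIm]] := idempotent_onto_sum reg n hh.
exists e; split => //.
  move=> x; have [X <-] := f_onto x; rewrite alpha_f hom_sum //.
  by apply: eq_bigr => k _; rewrite eh.
move=> m; have [x ->] := eIm m.
by exists (f (\sum_(k < n) inj_coord n k (x k))); rewrite !hom_sum.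
Qed.

(* (a) => (b), injectivity: gamma = beta o alpha^-1 o e, where e retracts M
   onto the finitely M-generated submodule Im alpha. *)
Lemma endoregular_in_FM (R : pzRingType) (M A : rmodType R) :
  endoregular M -> in_FM M A.
Proof.
move=> reg N alpha beta fgN halpha alpha_inj hbeta.
have [e [he e_alpha eIm]] := endoregular_fin_gen_retract reg fgN halpha.
pose z m := proj1_sig (cid (eIm m)).
have alpha_z m : alpha (z m) = e m := proj2_sig (cid (eIm m)).
exists (fun m => beta (z m)); split.
  move=> a m m'; rewrite -hbeta; congr beta; apply: alpha_inj.
  by rewrite halpha !alpha_z he.
by move=> x; congr beta; apply: alpha_inj; rewrite alpha_z e_alpha.
Qed.

(* (a) => (b), D2: a kernel Y = Ker p is a summand since p is regular. *)
Lemma endoregular_D2 (R : pzRingType) (M : rmodType R) :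
  endoregular M -> D2 M.
Proof.
move=> reg Y _ [p [hp [_ kerp]]].
have -> : Y = (fun m => p m = 0).
  by apply/funext => m; apply/propext; exact: iff_sym (kerp m).
have [q [hq pqp]] := reg p hp.
exact: regular_kernel_summand hp hq pqp.
Qed.

Lemma image_fin_gen (R : pzRingType) (M K : rmodType R) (f : M -> K)
    (hf : is_hom f) :
  fin_gen_by M (submod_type (submod_image hf)).
Proof.
have inIm m : f m \in in_submod (submod_image hf) by apply/asboolP; exists m.
exists 1%N; split => //.
exists (fun X : {ffun 'I_1 -> M} => exist _ (f (X ord0)) (inIm _)).
split; first by move=> a X Y; apply: val_inj; rewrite /= !ffunE hf.
move=> y; have /asboolP [m fm] := valP y; exists [ffun=> m].
by apply: val_inj; rewrite /= ffunE.
Qed.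

(* If Im f belongs to F_M, extending its identity along the inclusion into M
   gives a retraction of M onto Im f. *)
Lemma in_FM_image_retract (R : pzRingType) (M : rmodType R) (f : M -> M)
    (hf : is_hom f) :
  in_FM M (submod_type (submod_image hf)) ->
  exists r : M -> M, [/\ is_hom r, (forall m, exists x, f x = r m) &
    (forall x, r (f x) = f x)].
Proof.
move=> FM; have [gamma [hgamma gamma_val]] :=
  FM _ _ id (image_fin_gen hf) (@val_is_hom _ _ _ (submod_image hf)) val_inj (fun _ _ _ => erefl).
exists (fun m => val (gamma m)); split.
- by move=> a m m'; rewrite hgamma.
- by move=> m; apply/asboolP; exact: (valP (gamma m)).
- move=> x; have inIm : f x \in in_submod (submod_image hf).
    by apply/asboolP; exists x.
  by rewrite -(gamma_val (exist _ (f x) inIm)).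
Qed.

(* (b) => (a): with r the retraction onto Im f, D2 makes Ker f a summand
   (M / Ker f = Im f is a summand), so r lifts to g with f g = r, and then
   f g f = r f = f. *)
Lemma D2_in_FM_endoregular (R : pzRingType) (M : rmodType R) :
  D2 M -> (forall A : rmodType R, in_FM M A) -> endoregular M.
Proof.
move=> hD2 hFM f hf.
have [r [hr rIm r_f]] := in_FM_image_retract (hFM (submod_type (submod_image hf))).
have Im_summand : summand (fun y => exists x, f x = y).
  apply: retract_summand (submod_image hf) hr rIm _.
  by move=> _ [x <-]; exact: r_f.
have ker_summand : summand (fun x => f x = 0).
  by apply: hD2; [exact: submod_kernel | exists f].
have [g [hg fg]] := kernel_summand_lift hf ker_summand hr rIm.
by exists g; split => // x; rewrite fg r_f.
Qed.

Theorem mainTheorem6 (R : pzRingType) (M : rmodType R) :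
  endoregular M <-> (D2 M /\ forall A : rmodType R, in_FM M A).
Proof.
split=> [reg | [hD2 hFM]]; last exact: D2_in_FM_endoregular.
by split=> [|A]; [exact: endoregular_D2 | exact: endoregular_in_FM].
Qed.
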